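(* Let $\varphi:=\frac{16}{3}\mathbb{1}-2\sqrt5 f_{24}:\mathbb{Z}/24\mathbb{Z}\to\mathbb{R}$. For every $a:\mathbb{Z}/24\mathbb{Z}\to[0,\infty)$, $$\big\|(a*\varphi)_+\big\|_2\le 2\|a\|_2 .$$
   Context: $\mathbb{1}$ is the constant function $1$ on $\mathbb{Z}/24\mathbb{Z}$; $f_{24}(t):=\#\{j\in\mathbb{Z}/24\mathbb{Z}:j^2\equiv t\ (\mathrm{mod}\ 24)\}$; $(a*\varphi)(t):=\frac1{24}\sum_{j\in\mathbb{Z}/24\mathbb{Z}}a(j)\varphi(t-j)$; $x_+:=\max(x,0)$ applied pointwise; $\|h\|_2:=(\sum_{t\in\mathbb{Z}/24\mathbb{Z}}|h(t)|^2)^{1/2}$. *)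

From mathcomp Require Import all_boot all_order all_algebra.
From mathcomp Require Import reals.
Set Implicit Arguments. Unset Strict Implicit. Unset Printing Implicit Defensive.
Import Order.TTheory GRing.Theory Num.Theory.
Local Open Scope ring_scope.

Section Defs.
Variable R : realType.

Definition f24 (t : 'Z_24) : R := (#|[set j : 'Z_24 | j * j == t]|)%:R.

Definition phi24 (t : 'Z_24) : R := 16%:R / 3%:R - 2%:R * Num.sqrt 5%:R * f24 t.

Definition conv24 (a b : 'Z_24 -> R) (t : 'Z_24) : R :=
  24%:R^-1 * \sum_(j : 'Z_24) a j * b (t - j).

Definition posp24 (h : 'Z_24 -> R) (t : 'Z_24) : R := Num.max (h t) 0.

Definition norm2_24 (h : 'Z_24 -> R) : R := Num.sqrt (\sum_(t : 'Z_24) (h t) ^+ 2).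
End Defs.

From mathcomp Require Import all_boot all_order all_algebra.
From mathcomp Require Import reals ring lra.
Import Order.TTheory GRing.Theory Num.Theory.
Set Implicit Arguments. Unset Strict Implicit. Unset Printing Implicit Defensive.
Local Open Scope ring_scope.

(* Since a >= 0 and 2 sqrt 5 >= 4, (a * phi)_+ <= (a * psi)_+ for psi = 16/3 - 4 f_24,
   whose convolution is explicit:
     (a * psi)(t) = 2/9 sum a
                    - (a t + 4 a(t-1) + 2 a(t-4) + 2 a(t-9) + a(t-12) + 2 a(t-16)) / 3.
   For real u, v we have u_+^2 + v_+^2 <= 2 ((u - v)/2)^2 + 2 ((u + v)/2)_+^2.  With
   u = (a * psi)(t) and v = (a * psi)(t + 12) the half-difference is a mean of differences
   a s - a (s + 12), controlled by Cauchy-Schwarz, while the average only depends on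
   b t = a t + a (t + 12) and equals M - g t - g (t + 15) with g >= 0 and M = 2/9 sum a.
   Grouping t along the 4-cycles of t |-> t + 15, then along the three cosets of
   3Z/24Z, reduces the bound sum (average)_+^2 <= sum b^2 to explicit polynomial
   inequalities in four and three real variables.  Finally
   sum b^2 + sum (a t - a (t + 12))^2 = 4 sum a^2. *)

Section PositivePart.
Variable R : realFieldType.
Implicit Types g s u v x y M G : R.

Definition pospart x := Num.max x 0.

Lemma pospartP x : (0 <= x /\ pospart x = x) \/ (x < 0 /\ pospart x = 0).
Proof.
by rewrite /pospart; case: (lerP 0 x) => hx; [left | right];
  rewrite ?maxEge ?hx // leNgt hx.
Qed.

Lemma pospart_sqr_le x y : x <= y -> pospart x ^+ 2 <= pospart y ^+ 2.
Proof.
by case: (pospartP x) => -[? ->]; case: (pospartP y) => -[? ->]; nra.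
Qed.

Lemma pospart_sqr_pair u v :
  pospart u ^+ 2 + pospart v ^+ 2
  <= 2 * ((u - v) / 2) ^+ 2 + 2 * pospart ((u + v) / 2) ^+ 2.
Proof.
have := sqr_ge0 (u - v).
by case: (pospartP u) => -[? ->]; case: (pospartP v) => -[? ->];
  case: (pospartP ((u + v) / 2)) => -[? ->]; nra.
Qed.

Lemma sqr_mean3_le u v : ((u + 2 * v) / 3) ^+ 2 <= (u ^+ 2 + 2 * v ^+ 2) / 3.
Proof. by have := sqr_ge0 (u - v); nra. Qed.

Lemma sqr_add4_le (p q r s : R) :
  (p + q + r + s) ^+ 2 <= 4 * (p ^+ 2 + q ^+ 2 + r ^+ 2 + s ^+ 2).
Proof.
have := sqr_ge0 (p - q); have := sqr_ge0 (p - r); have := sqr_ge0 (p - s).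
by have := sqr_ge0 (q - r); have := sqr_ge0 (q - s); have := sqr_ge0 (r - s); nra.
Qed.

Definition cycle_excess M G :=
  if 2 * M <= G then - (G ^+ 2) / 4
  else if M <= G then 3 * M ^+ 2 - 2 * M * G else (2 * M - G) ^+ 2.

Lemma cycle4_sqr_le g0 g1 g2 g3 M :
  0 <= g0 -> 0 <= g1 -> 0 <= g2 -> 0 <= g3 -> g2 <= g0 -> g3 <= g1 ->
  M <= g0 + g1 + g2 + g3 ->
  0 <= M - g0 - g1 -> 0 <= M - g1 - g2 -> 0 <= M - g2 - g3 -> 0 <= M - g3 - g0 ->
  (M - g0 - g1) ^+ 2 + (M - g1 - g2) ^+ 2 + (M - g2 - g3) ^+ 2 + (M - g3 - g0) ^+ 2 <=
  g0 ^+ 2 + g1 ^+ 2 + g2 ^+ 2 + g3 ^+ 2 + (3 * M ^+ 2 - 2 * M * (g0 + g1 + g2 + g3)).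
Proof. by move=> *; have := sqr_ge0 (g2 - g3); nra. Qed.

Lemma pospart_cycle4_le g0 g1 g2 g3 M :
  0 <= g0 -> 0 <= g1 -> 0 <= g2 -> 0 <= g3 -> 0 <= M ->
  pospart (M - g0 - g1) ^+ 2 + pospart (M - g1 - g2) ^+ 2
    + pospart (M - g2 - g3) ^+ 2 + pospart (M - g3 - g0) ^+ 2
  <= g0 ^+ 2 + g1 ^+ 2 + g2 ^+ 2 + g3 ^+ 2 + cycle_excess M (g0 + g1 + g2 + g3).
Proof.
move=> h0 h1 h2 h3 hM; rewrite /cycle_excess.
have := sqr_ge0 (g0 - g1 + g2 - g3); have := sqr_ge0 (g0 + g1 - g2 - g3).
have := sqr_ge0 (g1 + g2 - g3 - g0).
case: (leP (2 * M)) => ?; [|case: (leP M) => ?];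
case: (pospartP (M - g0 - g1)) => -[? ->]; case: (pospartP (M - g1 - g2)) => -[? ->];
case: (pospartP (M - g2 - g3)) => -[? ->]; case: (pospartP (M - g3 - g0)) => -[? ->];
try nra; move=> _ _ _;
try (first [ have := sqr_ge0 (M - g1 - g3); nra | have := sqr_ge0 (M - g0 - g2); nra
  | have := sqr_ge0 (g0 - g1); nra | have := sqr_ge0 (g1 - g2); nra
  | have := sqr_ge0 (g2 - g3); nra | have := sqr_ge0 (g3 - g0); nra]).
(* All four terms are positive: reflect the cycle so that g2 <= g0 and g3 <= g1. *)
have [hg02|hg02] := lerP g2 g0; have [hg13|hg13] := lerP g3 g1.
- by have := @cycle4_sqr_le g0 g1 g2 g3 M; lra.
- by have := @cycle4_sqr_le g0 g3 g2 g1 M; lra.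
- by have := @cycle4_sqr_le g2 g1 g0 g3 M; lra.
- by have := @cycle4_sqr_le g2 g3 g0 g1 M; lra.
Qed.

Lemma cycle_excess3_le s0 s1 s2 :
  0 <= s0 -> 0 <= s1 -> 0 <= s2 ->
  cycle_excess (2 / 9 * (s0 + s1 + s2)) ((s0 + 2 * s2) / 3)
    + cycle_excess (2 / 9 * (s0 + s1 + s2)) ((s1 + 2 * s0) / 3)
    + cycle_excess (2 / 9 * (s0 + s1 + s2)) ((s2 + 2 * s1) / 3)
  <= ((s0 - s2) ^+ 2 + (s1 - s0) ^+ 2 + (s2 - s1) ^+ 2) / 18.
Proof.
move=> h0 h1 h2; rewrite /cycle_excess.
have := sqr_ge0 (s0 - s1); have := sqr_ge0 (s1 - s2); have := sqr_ge0 (s2 - s0).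
by do 3! (case: ifP => [?|/negbT]; last rewrite -ltNge => ?;
  [|case: ifP => [?|/negbT]; last rewrite -ltNge => ?]); nra.
Qed.
End PositivePart.

Lemma sqrt_le_twice_sqrt (R : rcfType) (x y : R) :
  0 <= y -> x <= 4 * y -> Num.sqrt x <= 2 * Num.sqrt y.
Proof.
move=> y_ge0 le_xy; have -> : 2 * Num.sqrt y = Num.sqrt (4 * y).
  by rewrite sqrtrM ?ler0n // (_ : 4 = 2 ^+ 2) ?sqrtr_sqr ?ger0_norm // expr2 -natrM.
by rewrite ler_sqrt // mulr_ge0 ?ler0n.
Qed.

Lemma sum_shift (V : finZmodType) (W : nmodType) (F : V -> W) (k : V) :
  \sum_t F (t + k) = \sum_t F t.
Proof. by rewrite [RHS](reindex_inj (addIr k)). Qed.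

Lemma Z24_addrr (t m n : 'Z_24) (k : nat) :
  nat_of_ord (m + n) = k -> t + m + n = t + k%:R.
Proof. by move=> h; rewrite -addrA -h natr_Zp. Qed.

Lemma Z24_subr (t m : 'Z_24) (k : nat) : nat_of_ord (- m) = k -> t - m = t + k%:R.
Proof. by move=> h; rewrite -h natr_Zp. Qed.

(* Rewrites every argument [a (t + m + n)] or [a (t - m)] with closed [m], [n]
   into [a t] or [a (t + k)] with a numeral [0 < k < 24]. *)
Ltac shift_norm a := repeat match goal with
  | |- context [ a (?t + ?m + ?n) ] =>
    let k := eval vm_compute in (nat_of_ord (m + n : 'Z_24)) in
    rewrite (@Z24_addrr t m n k erefl) ?mulr0n ?addr0
  | |- context [ a (?t - ?m) ] =>
    let k := eval vm_compute in (nat_of_ord (- m : 'Z_24)) in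
    rewrite (@Z24_subr t m k erefl) ?mulr0n ?addr0
  end.

Lemma sum_Z24E (W : nmodType) (F : 'Z_24 -> W) : \sum_t F t =
  F 0%:R + F 1%:R + F 2%:R + F 3%:R + F 4%:R + F 5%:R + F 6%:R + F 7%:R
  + F 8%:R + F 9%:R + F 10%:R + F 11%:R + F 12%:R + F 13%:R + F 14%:R + F 15%:R
  + F 16%:R + F 17%:R + F 18%:R + F 19%:R + F 20%:R + F 21%:R + F 22%:R + F 23%:R.
Proof.
have -> : \sum_t F t = \sum_(0 <= i < 24) F i%:R.
  rewrite big_mkord; apply: eq_bigr => i _; congr F; apply: val_inj.
  by rewrite /= val_Zp_nat // modn_small.
by rewrite /index_iota /= !big_cons big_nil !addrA addr0.
Qed.

Section Convolution.
Variable R : realType.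
Implicit Types a b c : 'Z_24 -> R.

Definition mass a := \sum_j a j.

Definition psi24 (t : 'Z_24) : R := 16%:R / 3%:R - 4%:R * f24 R t.

Lemma phi24_le_psi24 t : phi24 R t <= psi24 t.
Proof.
have sqrt5_ge2 : 2 <= Num.sqrt 5%:R :> R.
  have -> : (2 : R) = Num.sqrt (2 ^+ 2) by rewrite sqrtr_sqr ger0_norm.
  by rewrite ler_sqrt //; lra.
have : 0 <= (Num.sqrt 5%:R - 2) * f24 R t by rewrite mulr_ge0 ?ler0n //; lra.
by rewrite /phi24 /psi24; lra.
Qed.

Lemma conv24_le_kernel a b c t : (forall j, 0 <= a j) -> (forall s, b s <= c s) ->
  conv24 a b t <= conv24 a c t.
Proof.
move=> ha hbc; rewrite /conv24 ler_wpM2l ?invr_ge0 ?ler0n //.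
by apply: ler_sum => j _; rewrite ler_wpM2l.
Qed.

Lemma sum_mul_f24 a t : \sum_j a j * f24 R (t - j) = \sum_u a (t - u * u).
Proof.
have f24E s : f24 R s = \sum_u (u * u == s)%:R.
  rewrite /f24 -sum1_card natr_sum big_mkcond.
  by apply: eq_bigr => u _; rewrite inE; case: eqP.
under eq_bigr => j _ do rewrite f24E mulr_sumr.
rewrite exchange_big; apply: eq_bigr => u _ /=.
rewrite (bigD1 (t - u * u)) //= big1 => [|j ne_j].
  by rewrite subKr eqxx mulr1 addr0.
suff -> : (u * u == t - j) = false by rewrite mulr0.
by apply: contraNF ne_j => /eqP ->; rewrite subKr.
Qed.

Lemma conv24_psi24E a t :
  conv24 a psi24 t = 2 / 9 * mass a - (a t + 4 * a (t + 23) + 2 * a (t + 20)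
                                       + 2 * a (t + 15) + a (t + 12) + 2 * a (t + 8)) / 3.
Proof.
rewrite /conv24 /psi24 /mass.
under eq_bigr => j _ do rewrite mulrBr [a j * (4%:R * _)]mulrCA.
rewrite big_split /= sumrN -mulr_suml -mulr_sumr sum_mul_f24.
rewrite (sum_Z24E (fun u => a (t - u * u))).
by shift_norm a; field.
Qed.
End Convolution.

Section Decomposition.
Variable R : realType.
Variable a : 'Z_24 -> R.
Hypothesis a_ge0 : forall j, 0 <= a j.

Local Notation h := (conv24 a (@psi24 R)).

Definition avg12 t := (h t + h (t + 12)) / 2.
Definition dev12 t := (h t - h (t + 12)) / 2.

Definition sym12 t := a t + a (t + 12).
Definition anti12 t := a t - a (t + 12).
Definition sym_mix t := sym12 t + 2 * sym12 (t + 20).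
Definition sym_gap t := sym12 t - sym12 (t + 20).
Definition coset3 t := sym12 t + sym12 (t + 15) + sym12 (t + 6) + sym12 (t + 21).

Definition orbit_excess t :=
  cycle_excess (2 / 9 * mass a) ((coset3 t + 2 * coset3 (t + 20)) / 3).

Lemma sym12_ge0 t : 0 <= sym12 t.
Proof. exact: addr_ge0. Qed.

Lemma coset3_ge0 t : 0 <= coset3 t.
Proof. by rewrite /coset3 !addr_ge0 ?sym12_ge0. Qed.

Lemma sum_pospart_conv_le :
  \sum_t pospart (h t) ^+ 2 <= \sum_t dev12 t ^+ 2 + \sum_t pospart (avg12 t) ^+ 2.
Proof.
have : \sum_t (pospart (h t) ^+ 2 + pospart (h (t + 12)) ^+ 2)
    <= \sum_t (2 * dev12 t ^+ 2 + 2 * pospart (avg12 t) ^+ 2).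
  by apply: ler_sum => t _; exact: pospart_sqr_pair.
rewrite !big_split /= (sum_shift (fun t => pospart (h t) ^+ 2) 12) -!mulr_sumr.
lra.
Qed.

Lemma dev12E t : dev12 t = (anti12 (t + 3) + 2 * anti12 (t + 11)) / 3.
Proof. by rewrite /dev12 /anti12 !conv24_psi24E; shift_norm a; lra. Qed.

Lemma sum_dev12_sqr_le : \sum_t dev12 t ^+ 2 <= \sum_t anti12 t ^+ 2.
Proof.
have anti12_shift k := sum_shift (fun t => anti12 t ^+ 2) k.
apply: le_trans (_ : \sum_t (anti12 (t + 3) ^+ 2 + 2 * anti12 (t + 11) ^+ 2) / 3 <= _).
  by apply: ler_sum => t _; rewrite dev12E sqr_mean3_le.
rewrite -mulr_suml big_split /= -mulr_sumr (anti12_shift 3) (anti12_shift 11).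
lra.
Qed.

Lemma avg12E t : avg12 t = 2 / 9 * mass a - sym_mix t / 3 - sym_mix (t + 15) / 3.
Proof. by rewrite /avg12 /sym_mix /sym12 !conv24_psi24E; shift_norm a; lra. Qed.

Lemma pospart_avg12_orbit_le t :
  pospart (avg12 t) ^+ 2 + pospart (avg12 (t + 15)) ^+ 2
    + pospart (avg12 (t + 6)) ^+ 2 + pospart (avg12 (t + 21)) ^+ 2
  <= (sym_mix t / 3) ^+ 2 + (sym_mix (t + 15) / 3) ^+ 2
    + (sym_mix (t + 6) / 3) ^+ 2 + (sym_mix (t + 21) / 3) ^+ 2 + orbit_excess t.
Proof.
have mix_ge0 u : 0 <= sym_mix u / 3.
  by rewrite /sym_mix divr_ge0 ?addr_ge0 ?mulr_ge0 ?sym12_ge0.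
have M_ge0 : 0 <= 2 / 9 * mass a.
  by rewrite mulr_ge0 ?divr_ge0 ?ler0n //; apply: sumr_ge0 => j _; exact: a_ge0.
have := pospart_cycle4_le (mix_ge0 t) (mix_ge0 (t + 15)) (mix_ge0 (t + 6))
  (mix_ge0 (t + 21)) M_ge0.
have avg12_orbit u v : sym_mix (u + 15) = sym_mix v ->
    avg12 u = 2 / 9 * mass a - sym_mix u / 3 - sym_mix v / 3.
  by rewrite avg12E => ->.
have [mix15 mix6 mix21] : [/\ sym_mix (t + 15 + 15) = sym_mix (t + 6),
    sym_mix (t + 6 + 15) = sym_mix (t + 21) & sym_mix (t + 21 + 15) = sym_mix t].
  by rewrite /sym_mix /sym12; shift_norm a; split; lra.
rewrite -(avg12_orbit _ _ erefl) -(avg12_orbit _ _ mix15) -(avg12_orbit _ _ mix6).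
rewrite -(avg12_orbit _ _ mix21).
suff -> : sym_mix t / 3 + sym_mix (t + 15) / 3 + sym_mix (t + 6) / 3 + sym_mix (t + 21) / 3
  = (coset3 t + 2 * coset3 (t + 20)) / 3 by [].
by rewrite /sym_mix /coset3 /sym12; shift_norm a; lra.
Qed.

Lemma sum_pospart_avg12_le :
  4 * \sum_t pospart (avg12 t) ^+ 2
  <= 4 / 9 * \sum_t sym_mix t ^+ 2 + \sum_t orbit_excess t.
Proof.
have : \sum_t (pospart (avg12 t) ^+ 2 + pospart (avg12 (t + 15)) ^+ 2
               + pospart (avg12 (t + 6)) ^+ 2 + pospart (avg12 (t + 21)) ^+ 2)
  <= \sum_t ((sym_mix t / 3) ^+ 2 + (sym_mix (t + 15) / 3) ^+ 2
             + (sym_mix (t + 6) / 3) ^+ 2 + (sym_mix (t + 21) / 3) ^+ 2 + orbit_excess t).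
  by apply: ler_sum => t _; exact: pospart_avg12_orbit_le.
have avg12_shift k := sum_shift (fun t => pospart (avg12 t) ^+ 2) k.
have mix_shift k := sum_shift (fun t => (sym_mix t / 3) ^+ 2) k.
rewrite !big_split /= (avg12_shift 15) (avg12_shift 6) (avg12_shift 21).
rewrite (mix_shift 15) (mix_shift 6) (mix_shift 21).
have -> : \sum_t (sym_mix t / 3) ^+ 2 = 1 / 9 * \sum_t sym_mix t ^+ 2.
  by rewrite mulr_sumr; apply: eq_bigr => t _; field.
lra.
Qed.

Lemma mass_coset3 t : mass a = coset3 t + coset3 (t + 16) + coset3 (t + 20).
Proof.
rewrite /mass (reindex_inj (addrI t)) (sum_Z24E (fun u => a (t + u))) /coset3 /sym12.
by shift_norm a; lra.
Qed.

Lemma coset3_add12 t : coset3 (t + 12) = coset3 t.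
Proof. by rewrite /coset3 /sym12; shift_norm a; lra. Qed.

Lemma orbit_excess_triple_le t :
  orbit_excess t + orbit_excess (t + 16) + orbit_excess (t + 20)
  <= ((coset3 t - coset3 (t + 20)) ^+ 2 + (coset3 (t + 16) - coset3 t) ^+ 2
      + (coset3 (t + 20) - coset3 (t + 16)) ^+ 2) / 18.
Proof.
rewrite /orbit_excess (mass_coset3 t); shift_norm coset3; rewrite coset3_add12.
exact: cycle_excess3_le (coset3_ge0 _) (coset3_ge0 _) (coset3_ge0 _).
Qed.

Lemma sum_orbit_excess_le :
  \sum_t orbit_excess t <= 1 / 18 * \sum_t (coset3 t - coset3 (t + 20)) ^+ 2.
Proof.
have := @ler_sum _ _ (index_enum 'Z_24) xpredT _ _ (fun t _ => orbit_excess_triple_le t).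
have diff_shift k := sum_shift (fun t => (coset3 t - coset3 (t + 20)) ^+ 2) k.
have diff16 : \sum_t (coset3 (t + 16) - coset3 t) ^+ 2
    = \sum_t (coset3 t - coset3 (t + 20)) ^+ 2.
  rewrite -(diff_shift 16); apply: eq_bigr => t _.
  by shift_norm coset3; rewrite coset3_add12.
have diff20 : \sum_t (coset3 (t + 20) - coset3 (t + 16)) ^+ 2
    = \sum_t (coset3 t - coset3 (t + 20)) ^+ 2.
  by rewrite -(diff_shift 20); apply: eq_bigr => t _; shift_norm coset3.
rewrite -mulr_suml !big_split /= (sum_shift orbit_excess 16) (sum_shift orbit_excess 20).
by rewrite diff16 diff20; lra.
Qed.

Lemma sum_coset3_diff_le :
  \sum_t (coset3 t - coset3 (t + 20)) ^+ 2 <= 16 * \sum_t sym_gap t ^+ 2.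
Proof.
apply: le_trans (_ : \sum_t 4 * (sym_gap t ^+ 2 + sym_gap (t + 15) ^+ 2
                                 + sym_gap (t + 6) ^+ 2 + sym_gap (t + 21) ^+ 2) <= _).
  apply: ler_sum => t _.
  have -> : coset3 t - coset3 (t + 20)
      = sym_gap t + sym_gap (t + 15) + sym_gap (t + 6) + sym_gap (t + 21).
    by rewrite /coset3 /sym_gap /sym12; shift_norm a; lra.
  exact: sqr_add4_le.
have gap_shift k := sum_shift (fun t => sym_gap t ^+ 2) k.
rewrite -mulr_sumr !big_split /= (gap_shift 15) (gap_shift 6) (gap_shift 21).
lra.
Qed.

Lemma sum_sym12_sqr :
  \sum_t sym12 t ^+ 2 = 1 / 9 * \sum_t sym_mix t ^+ 2 + 2 / 9 * \sum_t sym_gap t ^+ 2.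
Proof.
have : \sum_t (sym_mix t ^+ 2 + 2 * sym_gap t ^+ 2)
    = \sum_t (3 * sym12 t ^+ 2 + 6 * sym12 (t + 20) ^+ 2).
  by apply: eq_bigr => t _; rewrite /sym_mix /sym_gap; ring.
by rewrite !big_split /= -!mulr_sumr (sum_shift (fun t => sym12 t ^+ 2) 20); lra.
Qed.

Lemma sum_pospart_avg12_sqr_le : \sum_t pospart (avg12 t) ^+ 2 <= \sum_t sym12 t ^+ 2.
Proof.
have := sum_pospart_avg12_le; have := sum_orbit_excess_le; have := sum_coset3_diff_le.
by rewrite sum_sym12_sqr; lra.
Qed.

Lemma sum_sym12_anti12_sqr :
  \sum_t sym12 t ^+ 2 + \sum_t anti12 t ^+ 2 = 4 * \sum_t a t ^+ 2.
Proof.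
rewrite -big_split /= (eq_bigr (fun t => 2 * a t ^+ 2 + 2 * a (t + 12) ^+ 2)).
  by rewrite big_split /= (sum_shift (fun t => 2 * a t ^+ 2) 12) -mulr_sumr; ring.
by move=> t _; rewrite /sym12 /anti12; ring.
Qed.

Lemma sum_pospart_conv_psi24_le : \sum_t pospart (h t) ^+ 2 <= 4 * \sum_t a t ^+ 2.
Proof.
have := sum_pospart_conv_le; have := sum_dev12_sqr_le; have := sum_pospart_avg12_sqr_le.
by rewrite -sum_sym12_anti12_sqr; lra.
Qed.
End Decomposition.

Theorem mainTheorem15 (R : realType) (a : 'Z_24 -> R) (ha : forall j, 0 <= a j) :
  norm2_24 (posp24 (conv24 a (@phi24 R))) <= 2%:R * norm2_24 a.
Proof.
apply: sqrt_le_twice_sqrt; first by apply: sumr_ge0 => t _; exact: sqr_ge0.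
apply: le_trans (sum_pospart_conv_psi24_le ha); apply: ler_sum => t _.
by apply: pospart_sqr_le; exact: conv24_le_kernel ha (@phi24_le_psi24 R).
Qed.
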